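(* Let $\varepsilon\ge0$ and let $x^\varepsilon_\omega=(y^\varepsilon_\omega,z^\varepsilon_\omega)\in\mathcal{X}$ be an $\varepsilon$-optimal solution of the penalty problem, i.e. $F_\omega(x^\varepsilon_\omega)\le F_\omega(x^\star_\omega)+\varepsilon$ and $z^\varepsilon_\omega(t)\ge0$ for a.e. $t\in\Omega$. Define $C_r=F(x^\star)-\operatorname{ess\,min}_{x\in\mathcal{X},z\ge0}F(x)$. Then $F(x^\varepsilon_\omega)\le F(x^\star)+\varepsilon$ and $r(x^\varepsilon_\omega)\le2\omega(C_r+\varepsilon)$.
   Context: Let $\Omega=(t_0,t_E)$ bounded, $t_1,\dots,t_M\in[t_0,t_E]$; $\mathcal{X}=(H^1(\Omega))^{n_y}\times(L^2(\Omega))^{n_z}$, $x=(y,z)$. For $f:\mathbb{R}^{n_y}\times\mathbb{R}^{n_y}\times\mathbb{R}^{n_z}\times\Omega\to\mathbb{R}$, $c$ (values in $\mathbb{R}^{n_c}$), $b:(\mathbb{R}^{n_y})^M\to\mathbb{R}^{n_b}$: $F(x)=\int_\Omega f(\dot y,y,z,t)dt$, $r(x)=\int_\Omega\|c(\dot y,y,z,t)\|_2^2dt+\|b(y(t_1),\dots,y(t_M))\|_2^2$. The DOP is to minimize $F$ subject to $b(\dots)=0$, $c(\dot y,y,z,t)=0$ and $z\ge0$ a.e.; by assumption it has a global minimizer $x^\star$ (so $r(x^\star)=0$). $F$ is bounded below on $\{x\in\mathcal{X}:z\ge0\}$. For $\omega\in(0,1)$, $F_\omega=F+\frac1{2\omega}r$;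 the penalty problem is to minimize $F_\omega$ over $\{x\in\mathcal{X}:z\ge0\text{ a.e.}\}$, and $x^\star_\omega$ is a minimizer of it. *)

From HB Require Import structures.
From mathcomp Require Import all_boot all_order all_algebra.
From mathcomp Require Import all_classical all_reals all_analysis.
Set Implicit Arguments. Unset Strict Implicit. Unset Printing Implicit Defensive.
Import Order.TTheory GRing.Theory Num.Theory.
Import numFieldNormedType.Exports.
Local Open Scope classical_set_scope.
Local Open Scope ring_scope.

Section DOP.
Variables (R : realType) (t0 tE : R) (ny nz nc nb M : nat).
Variables (tp : 'I_M -> R).
Variables (f : ('I_ny -> R) -> ('I_ny -> R) -> ('I_nz -> R) -> R -> R).
Variables (c : ('I_ny -> R) -> ('I_ny -> R) -> ('I_nz -> R) -> R -> ('I_nc -> R)).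
Variables (b : ('I_M -> 'I_ny -> R) -> ('I_nb -> R)).

Definition Omega : set R := `]t0, tE[.

Definition Xpair := ((R -> 'I_ny -> R) * (R -> 'I_nz -> R))%type.

Definition L2fun (w : R -> R) : Prop :=
  measurable_fun Omega w /\
  (\int[lebesgue_measure]_(t in Omega) ((w t) ^+ 2)%:E < +oo)%E.

(* scalar H^1(Omega), represented by its absolutely continuous representative:
   u(t) = u(t0) + \int_{t0}^t v with v in L^2(Omega) *)
Definition H1fun (u : R -> R) : Prop :=
  exists v : R -> R, L2fun v /\
    forall t, t0 <= t <= tE ->
      (u t)%:E = ((u t0)%:E + \int[lebesgue_measure]_(s in `[t0, t]) (v s)%:E)%E.

Definition inX (x : Xpair) : Prop :=
  (forall i, H1fun (fun t => x.1 t i)) /\ (forall j, L2fun (fun t => x.2 t j)).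

(* time derivative (exists a.e. for H^1 functions on an interval) *)
Definition ydot (y : R -> 'I_ny -> R) (t : R) : 'I_ny -> R :=
  fun i => derive1 (fun s => y s i) t.

Definition sqnorm n (v : 'I_n -> R) : R := \sum_(i < n) v i ^+ 2.

Definition Fobj (x : Xpair) : R :=
  Rintegral lebesgue_measure Omega (fun t => f (ydot x.1 t) (x.1 t) (x.2 t) t).

Definition rpen (x : Xpair) : R :=
  Rintegral lebesgue_measure Omega
    (fun t => sqnorm (c (ydot x.1 t) (x.1 t) (x.2 t) t))
  + sqnorm (b (fun k => x.1 (tp k))).

Definition Fomega (omega : R) (x : Xpair) : R := Fobj x + (2 * omega)^-1 * rpen x.

Definition zpos (x : Xpair) : Prop :=
  {ae lebesgue_measure, forall t, Omega t -> forall j, 0 <= x.2 t j}.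

Definition penFeasible (x : Xpair) : Prop := inX x /\ zpos x.

Definition dopFeasible (x : Xpair) : Prop :=
  inX x /\ b (fun k => x.1 (tp k)) = 0 /\
  {ae lebesgue_measure, forall t, Omega t -> c (ydot x.1 t) (x.1 t) (x.2 t) t = 0} /\
  zpos x.

Definition dopGlobalMin (xs : Xpair) : Prop :=
  dopFeasible xs /\ forall x, dopFeasible x -> Fobj xs <= Fobj x.

Definition penMin (omega : R) (xo : Xpair) : Prop :=
  penFeasible xo /\ forall x, penFeasible x -> Fomega omega xo <= Fomega omega x.

(* C_r = F(x_star) - ess min over {x in X, z >= 0} of F, read as an infimum *)
Definition Cr (xs : Xpair) : R := Fobj xs - inf [set Fobj x | x in penFeasible].

End DOP.

(** Since a global minimiser [xs] of the DOP has zero residual [r xs = 0], it is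
    feasible for the penalty problem with [F_omega xs = F xs].  Chaining
    [F_omega xe <= F_omega xo + eps <= F_omega xs + eps = F xs + eps] and
    dropping the nonnegative penalty term gives the bound on [F xe]; keeping it
    and bounding [F xe] below by the infimum of [F] gives the bound on [r xe]. *)
From HB Require Import structures.
From mathcomp Require Import all_boot all_order all_algebra.
From mathcomp Require Import all_classical all_reals all_analysis.
From mathcomp Require Import lra measurable_realfun.
Set Implicit Arguments. Unset Strict Implicit.
Import Order.TTheory GRing.Theory Num.Theory.
Local Open Scope classical_set_scope.
Local Open Scope ring_scope.
Import HBNNSimple.

Lemma sqnorm_ge0 (R : realType) n (v : 'I_n -> R) : 0 <= sqnorm v.
Proof. by apply: sumr_ge0 => i _; exact: sqr_ge0. Qed.

Lemma sqnorm0 (R : realType) n : sqnorm (0 : 'I_n -> R) = 0.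
Proof. by rewrite /sqnorm big1 // => i _; rewrite /= expr0n. Qed.

(* No measurability of [g] is needed: every simple function below [g] vanishes
   almost everywhere, hence has zero integral. *)
Lemma ge0_integral_ae_eq0 d (T : measurableType d) (R : realType)
    (mu : {measure set T -> \bar R}) (D : set T) (g : T -> \bar R) :
  (forall t, D t -> (0 <= g t)%E) -> {ae mu, forall t, D t -> g t = 0%E} ->
  (\int[mu]_(t in D) g t = 0)%E.
Proof.
move=> g0 [N [mN N0 gN]]; rewrite ge0_integralE //.
apply/eqP; rewrite eq_le; apply/andP; split; last first.
  apply: ereal_sup_ubound; exists nnsfun0 => //; last exact: sintegral0.
  by move=> t /=; rewrite patchE; case: ifPn => // /set_mem /g0.
apply/ge_ereal_sup => _ [h /= h_le <-].
have := @integral_nnsfun _ _ _ mu setT measurableT h.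
rewrite patch_setT => <-.
rewrite (ae_eq_integral (cst 0%E)) ?integral0 //.
- by apply/measurable_EFinP; exact: measurable_funPT.
- exists N; split => //; apply: subset_trans gN; apply: subsetC => t gt0 _ /=.
  apply/le_anti/andP; split; last by rewrite lee_fin; exact: fun_ge0.
  apply: (le_trans (h_le t)).
  by rewrite patchE; case: ifPn => // /set_mem /gt0 ->.
Qed.

Lemma penalty_bounds (R : realFieldType) (w eps m Fe re Fs : R) :
  0 < w -> 0 <= re -> m <= Fe -> Fe + w^-1 * re <= Fs + eps ->
  Fe <= Fs + eps /\ re <= w * (Fs - m + eps).
Proof.
move=> w0 re0 mFe; set u := w^-1 * re.
have -> : re = w * u by rewrite /u mulrA mulfV ?gt_eqF // mul1r.
have u0 : 0 <= u by rewrite mulr_ge0 // invr_ge0 ltW.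
by move=> Fe_le; split; [lra | rewrite ler_pM2l //; lra].
Qed.

Section PenaltyProblem.
Variables (R : realType) (t0 tE : R) (ny nz nc nb M : nat) (tp : 'I_M -> R).
Variables (f : ('I_ny -> R) -> ('I_ny -> R) -> ('I_nz -> R) -> R -> R).
Variables (c : ('I_ny -> R) -> ('I_ny -> R) -> ('I_nz -> R) -> R -> ('I_nc -> R)).
Variables (b : ('I_M -> 'I_ny -> R) -> ('I_nb -> R)).

Local Notation Fobj := (Fobj t0 tE f).
Local Notation rpen := (rpen t0 tE tp c b).
Local Notation Fomega := (Fomega t0 tE tp f c b).
Local Notation dopFeasible := (dopFeasible t0 tE tp c b).
Local Notation penFeasible := (@penFeasible R t0 tE ny nz).

Lemma rpen_ge0 x : 0 <= rpen x.
Proof.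
apply: addr_ge0; last exact: sqnorm_ge0.
by apply: Rintegral_ge0 => t _; exact: sqnorm_ge0.
Qed.

Lemma rpen_dopFeasible x : dopFeasible x -> rpen x = 0.
Proof.
move=> [_ [bx0 [[N [mN N0 cN] _]]]]; rewrite /rpen bx0 sqnorm0 addr0 /Rintegral.
rewrite ge0_integral_ae_eq0 // => [t _|]; first by rewrite lee_fin sqnorm_ge0.
exists N; split => //; apply: subset_trans cN; apply: subsetC => t c0 Ot /=.
by rewrite c0 // sqnorm0.
Qed.

Lemma Fomega_dopFeasible omega x : dopFeasible x -> Fomega omega x = Fobj x.
Proof. by move/rpen_dopFeasible; rewrite /Fomega => ->; rewrite mulr0 addr0. Qed.

Lemma dopFeasible_penFeasible x : dopFeasible x -> penFeasible x.
Proof. by case=> inXx [_ [_ zx]]; split. Qed.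

Lemma inf_Fobj_le x :
  (exists m : R, forall y, penFeasible y -> m <= Fobj y) -> penFeasible x ->
  inf [set Fobj y | y in penFeasible] <= Fobj x.
Proof.
move=> [m Fm] px; apply: ge_inf; last by exists x.
by exists m => _ [y py <-]; exact: Fm.
Qed.

End PenaltyProblem.

Theorem mainTheorem10 (R : realType) (t0 tE : R) (ny nz nc nb M : nat)
  (tp : 'I_M -> R)
  (f : ('I_ny -> R) -> ('I_ny -> R) -> ('I_nz -> R) -> R -> R)
  (c : ('I_ny -> R) -> ('I_ny -> R) -> ('I_nz -> R) -> R -> ('I_nc -> R))
  (b : ('I_M -> 'I_ny -> R) -> ('I_nb -> R))
  (xs xo xe : Xpair R ny nz) (omega eps : R) :
  t0 < tE ->
  (forall k, t0 <= tp k <= tE) ->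
  dopGlobalMin t0 tE tp f c b xs ->
  (exists m : R, forall x, penFeasible t0 tE x -> m <= Fobj t0 tE f x) ->
  0 < omega < 1 ->
  penMin t0 tE tp f c b omega xo ->
  0 <= eps ->
  penFeasible t0 tE xe ->
  Fomega t0 tE tp f c b omega xe <= Fomega t0 tE tp f c b omega xo + eps ->
  Fobj t0 tE f xe <= Fobj t0 tE f xs + eps /\
  rpen t0 tE tp c b xe <= 2 * omega * (Cr t0 tE f xs + eps).
Proof.
move=> _ _ [xsF _] Fbdd /andP[omega0 _] [_ xo_min] _ xeF xe_opt.
have xe_le_xs : Fomega t0 tE tp f c b omega xe <= Fobj t0 tE f xs + eps.
  rewrite -(Fomega_dopFeasible f omega xsF).
  apply: le_trans xe_opt _; rewrite lerD2r; apply: xo_min.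
  exact: dopFeasible_penFeasible xsF.
have w_gt0 : 0 < 2 * omega by rewrite mulr_gt0.
exact: penalty_bounds w_gt0 (rpen_ge0 t0 tE tp c b xe) (inf_Fobj_le Fbdd xeF) xe_le_xs.
Qed.
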